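(* There is a constant $C$ such that for all $u,v\in\mathbb{R}$, \[\int_0^\pi e^{-(u-v\cos s)^2}\frac{ds}{\pi}\le\frac{C}{\sqrt{(|u+v|+1)(|u-v|+1)}}.\] *)

From Stdlib Require Import Reals.
From Coquelicot Require Import Coquelicot.

From Stdlib Require Import Reals Lra Psatz.
From Coquelicot Require Import Coquelicot.
Open Scope R_scope.

(* Split [0, PI] at [PI/2]; the reflection [s |-> PI - s] turns the second half
   into the first one with [v] replaced by [-v].  On [0, PI/2] substitute
   [t = tan (s/2)] in [0, 1], so that [u - v cos s = ((u - v) + (u + v) t^2) / (1 + t^2)].
   For [a = u - v], [b = u + v] and [K = (|a| + 1) (|b| + 1)] there is a centre [t0]
   with [K (t - t0)^2 <= 63 + 16 (a + b t^2)^2] on [0, 1]: [t0 = sqrt (|a| / |b|)]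
   when [|a|, |b| >= 1], and [t0 = 0] otherwise.  With [exp (-y) <= 1 / (1 + y)]
   the integrand is thus bounded by a Cauchy density of width [1 / sqrt K] in [t],
   whose integral is at most [PI / sqrt K]. *)

Lemma sqr_abs_sub_le (x y : R) : (Rabs x - Rabs y) ^ 2 <= (x + y) ^ 2.
Proof.
  rewrite <- (pow2_abs (x + y)), <- (pow2_abs (Rabs x - Rabs y)).
  pose proof (Rabs_triang_inv2 x (- y)) as H.
  rewrite Rabs_Ropp in H. replace (x - - y) with (x + y) in H by ring.
  pose proof (Rabs_pos (Rabs x - Rabs y)). nra.
Qed.

Lemma sqr_sub_mul_sqr_ge (A B t : R) : 0 <= A -> 0 < B -> 0 <= t ->
  A * B * (t - sqrt (A / B)) ^ 2 <= (A - B * t ^ 2) ^ 2.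
Proof.
  intros HA HB Ht.
  set (t0 := sqrt (A / B)).
  assert (Ht0 : 0 <= t0) by apply sqrt_pos.
  assert (HAt0 : A = B * t0 ^ 2).
  { unfold t0. rewrite pow2_sqrt by (apply Rdiv_le_0_compat; lra). field. lra. }
  rewrite HAt0.
  replace ((B * t0 ^ 2 - B * t ^ 2) ^ 2) with ((B * (t - t0)) ^ 2 * (t0 + t) ^ 2) by ring.
  replace (B * t0 ^ 2 * B * (t - t0) ^ 2) with ((B * (t - t0)) ^ 2 * t0 ^ 2) by ring.
  apply Rmult_le_compat_l; [apply pow2_ge_0 | nra].
Qed.

Lemma affine_le_sqr_shift (x c : R) : 0 <= c <= 1 -> 0 <= x ->
  2 * (x + 1) <= 63 + 16 * (x - c) ^ 2.
Proof.
  intros Hc Hx. destruct (Rle_or_lt x 1); [nra |].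
  assert ((x - 1) ^ 2 <= (x - c) ^ 2) by nra. nra.
Qed.

Lemma sqr_even_quadratic_ge_dist (a b : R) : exists t0, forall t, 0 <= t <= 1 ->
  (Rabs a + 1) * (Rabs b + 1) * (t - t0) ^ 2 <= 63 + 16 * (a + b * t ^ 2) ^ 2.
Proof.
  set (A := Rabs a). set (B := Rabs b).
  assert (HA : 0 <= A) by apply Rabs_pos.
  assert (HB : 0 <= B) by apply Rabs_pos.
  assert (HQ : forall t, 0 <= t -> (A - B * t ^ 2) ^ 2 <= (a + b * t ^ 2) ^ 2).
  { intros t Ht. pose proof (sqr_abs_sub_le a (b * t ^ 2)) as H.
    rewrite Rabs_mult, (Rabs_pos_eq (t ^ 2)) in H by (apply pow_le; lra). exact H. }
  destruct (Rlt_or_le A 1) as [A1 | A1]; [| destruct (Rlt_or_le B 1) as [B1 | B1]].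
  - exists 0. intros t Ht. specialize (HQ t (proj1 Ht)).
    assert (Ht2 : 0 <= t ^ 2 <= 1) by nra.
    pose proof (affine_le_sqr_shift (B * t ^ 2) A ltac:(lra) ltac:(nra)).
    assert (0 <= (1 - A) * ((B + 1) * t ^ 2)) by (apply Rmult_le_pos; nra).
    replace (t - 0) with t by ring. nra.
  - exists 0. intros t Ht. specialize (HQ t (proj1 Ht)).
    assert (Ht2 : 0 <= t ^ 2 <= 1) by nra.
    pose proof (affine_le_sqr_shift A (B * t ^ 2) ltac:(nra) HA).
    assert (0 <= (A + 1) * (2 - (B + 1) * t ^ 2)) by (apply Rmult_le_pos; nra).
    replace (t - 0) with t by ring. nra.
  - exists (sqrt (A / B)). intros t Ht.
    pose proof (sqr_sub_mul_sqr_ge A B t HA ltac:(lra) (proj1 Ht)).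
    specialize (HQ t (proj1 Ht)).
    pose proof (pow2_ge_0 (t - sqrt (A / B))).
    assert ((A + 1) * (B + 1) <= 4 * A * B) by nra.
    nra.
Qed.

Lemma exp_neg_le_inv (y : R) : 0 <= y -> exp (- y) <= / (1 + y).
Proof.
  intros Hy. rewrite exp_Ropp. apply Rinv_le_contravar; [lra | apply exp_ineq1_le].
Qed.

Lemma cos_tan_half (s : R) : cos (s / 2) <> 0 ->
  cos s = (1 - tan (s / 2) ^ 2) / (1 + tan (s / 2) ^ 2).
Proof.
  intros Hc. unfold tan.
  pose proof (sin2_cos2 (s / 2)) as Hp. unfold Rsqr in Hp.
  replace s with (2 * (s / 2)) at 1 by field. rewrite cos_2a.
  set (c := cos (s / 2)) in *. set (si := sin (s / 2)) in *.
  field_simplify_eq; [| split; [nra | auto]].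
  - transitivity ((c ^ 2 - si ^ 2) * (si * si + c * c)); [ring | rewrite Hp; ring].
  - intros H. nra.
Qed.

Lemma tan_half_bounds (s : R) : 0 <= s <= PI / 2 -> 0 <= tan (s / 2) <= 1.
Proof.
  intros Hs. pose proof PI_RGT_0.
  rewrite <- tan_0, <- tan_PI4.
  split; apply tan_incr_1; lra.
Qed.

(* The density [1 / (1 + K (t - t0)^2)] pulled back along [t = tan (s/2)]; its
   primitive is [atan (sqrt K * (tan (s/2) - t0)) / sqrt K]. *)
Definition cauchy_tan_half (K t0 s : R) : R :=
  (1 + tan (s / 2) ^ 2) / (2 * (1 + K * (tan (s / 2) - t0) ^ 2)).

Lemma ex_derive_tan (x : R) : cos x <> 0 -> ex_derive tan x.
Proof. intros Hc. eexists. exact (is_derive_tan x Hc). Qed.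

Lemma is_derive_atan_tan_half (K t0 s : R) : 0 < K -> cos (s / 2) <> 0 ->
  is_derive (fun s => atan (sqrt K * (tan (s / 2) - t0)) / sqrt K) s
    (cauchy_tan_half K t0 s).
Proof.
  intros HK Hc. unfold cauchy_tan_half.
  assert (HsK : 0 < sqrt K) by (apply sqrt_lt_R0; lra).
  assert (HK2 : sqrt K * sqrt K = K) by (apply sqrt_sqrt; lra).
  auto_derive.
  - change (s * / 2) with (s / 2). apply ex_derive_tan. exact Hc.
  - change (s * / 2) with (s / 2).
    replace (Derive (fun x => tan x) (s / 2)) with (tan (s / 2) ^ 2 + 1)
      by (symmetry; apply is_derive_unique, is_derive_tan, Hc).
    set (T := tan (s / 2)).
    pose proof (pow2_ge_0 (T - t0)).
    replace (sqrt K * (T + - t0) * (sqrt K * (T + - t0) * 1))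
      with ((sqrt K * sqrt K) * (T - t0) ^ 2) by ring.
    rewrite HK2.
    field. nra.
Qed.

Lemma continuous_cauchy_tan_half (K t0 s : R) : 0 <= K -> cos (s / 2) <> 0 ->
  continuous (cauchy_tan_half K t0) s.
Proof.
  intros HK Hc. apply (@ex_derive_continuous R_AbsRing R_NormedModule).
  unfold cauchy_tan_half. auto_derive. change (s * / 2) with (s / 2).
  pose proof (pow2_ge_0 (tan (s / 2) + - t0)).
  repeat split; try apply ex_derive_tan; try exact Hc. nra.
Qed.

Lemma RInt_le_primitive (f F f' : R -> R) (a b : R) : a <= b -> ex_RInt f a b ->
  (forall x, a <= x <= b -> is_derive F x (f' x)) ->
  (forall x, a <= x <= b -> continuous f' x) ->
  (forall x, a <= x <= b -> f x <= f' x) ->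
  RInt f a b <= F b - F a.
Proof.
  intros Hab Hf HF Hf' Hle.
  assert (HI : is_RInt f' a b (F b - F a)).
  { apply (is_RInt_derive F f'); rewrite Rmin_left, Rmax_right by exact Hab; assumption. }
  rewrite <- (is_RInt_unique _ _ _ _ HI).
  apply RInt_le; [exact Hab | exact Hf | eexists; exact HI |].
  intros x Hx. apply Hle. lra.
Qed.

Lemma RInt_comp_reflect (f : R -> R) (c a b : R) : ex_RInt f (c - a) (c - b) ->
  RInt (fun x => f (c - x)) a b = RInt f (c - b) (c - a).
Proof.
  intros Hf.
  replace (c - a) with (-1 * a + c) in * by ring.
  replace (c - b) with (-1 * b + c) in * by ring.
  rewrite <- (opp_RInt_swap f), <- (RInt_comp_lin f) by exact Hf.
  pose proof (RInt_opp _ _ _ (ex_RInt_comp_lin f (-1) c a b Hf)) as E.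
  etransitivity; [| exact E].
  apply RInt_ext. intros x _.
  change (f (c - x) = - (-1 * f (-1 * x + c))).
  replace (-1 * x + c) with (c - x) by ring. ring.
Qed.

Definition gauss_cos (u v s : R) : R := exp (- (u - v * cos s) ^ 2) / PI.

Lemma continuous_gauss_cos (u v s : R) : continuous (gauss_cos u v) s.
Proof.
  apply (@ex_derive_continuous R_AbsRing R_NormedModule).
  unfold gauss_cos. auto_derive. exact I.
Qed.

Lemma ex_RInt_gauss_cos (u v a b : R) : ex_RInt (gauss_cos u v) a b.
Proof.
  apply (@ex_RInt_continuous R_CompleteNormedModule).
  intros s _. apply continuous_gauss_cos.
Qed.

Lemma exp_neg_sqr_le_cauchy_tan_half (u v t0 s : R) : 0 <= s <= PI / 2 ->
  (forall t, 0 <= t <= 1 ->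
     (Rabs (u - v) + 1) * (Rabs (u + v) + 1) * (t - t0) ^ 2
     <= 63 + 16 * ((u - v) + (u + v) * t ^ 2) ^ 2) ->
  exp (- (u - v * cos s) ^ 2)
  <= 128 * cauchy_tan_half ((Rabs (u - v) + 1) * (Rabs (u + v) + 1)) t0 s.
Proof.
  intros Hs Ht0.
  set (K := (Rabs (u - v) + 1) * (Rabs (u + v) + 1)) in *.
  assert (HK : 0 <= K) by (unfold K; pose proof (Rabs_pos (u - v)); pose proof (Rabs_pos (u + v)); nra).
  assert (Hc : cos (s / 2) <> 0) by (apply Rgt_not_eq, cos_gt_0; pose proof PI_RGT_0; lra).
  pose proof (tan_half_bounds s Hs) as HT.
  pose proof (cos_tan_half s Hc) as Hcos.
  unfold cauchy_tan_half.
  set (T := tan (s / 2)) in *. set (w := u - v * cos s).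
  specialize (Ht0 T HT).
  assert (HT2 : 0 <= T ^ 2 <= 1) by nra.
  assert (Hw : w * (1 + T ^ 2) = (u - v) + (u + v) * T ^ 2).
  { unfold w. rewrite Hcos. field. nra. }
  assert (HQ : ((u - v) + (u + v) * T ^ 2) ^ 2 <= 4 * w ^ 2).
  { rewrite <- Hw. replace ((w * (1 + T ^ 2)) ^ 2) with (w ^ 2 * (1 + T ^ 2) ^ 2) by ring.
    rewrite (Rmult_comm 4). apply Rmult_le_compat_l; [apply pow2_ge_0 | nra]. }
  pose proof (pow2_ge_0 (T - t0)).
  assert (Hd : 0 < 1 + K * (T - t0) ^ 2) by nra.
  eapply Rle_trans; [apply exp_neg_le_inv, pow2_ge_0 |].
  apply Rle_trans with (64 / (1 + K * (T - t0) ^ 2)).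
  - replace (64 / (1 + K * (T - t0) ^ 2)) with (/ ((1 + K * (T - t0) ^ 2) / 64)) by (field; lra).
    apply Rinv_le_contravar; [lra | nra].
  - unfold Rdiv. rewrite Rinv_mult.
    assert (0 < / (1 + K * (T - t0) ^ 2)) by (apply Rinv_0_lt_compat; lra).
    nra.
Qed.

Lemma RInt_gauss_cos_quarter_le (u v : R) :
  RInt (gauss_cos u v) 0 (PI / 2)
  <= 128 / sqrt ((Rabs (u - v) + 1) * (Rabs (u + v) + 1)).
Proof.
  destruct (sqr_even_quadratic_ge_dist (u - v) (u + v)) as [t0 Ht0].
  set (K := (Rabs (u - v) + 1) * (Rabs (u + v) + 1)) in *.
  assert (HK : 0 < K) by (unfold K; pose proof (Rabs_pos (u - v)); pose proof (Rabs_pos (u + v)); nra).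
  assert (HsK : 0 < sqrt K) by (apply sqrt_lt_R0; exact HK).
  pose proof PI_RGT_0 as HPI.
  assert (Hc : forall s, 0 <= s <= PI / 2 -> cos (s / 2) <> 0)
    by (intros s Hs; apply Rgt_not_eq, cos_gt_0; lra).
  set (F := fun s => 128 / PI * (atan (sqrt K * (tan (s / 2) - t0)) / sqrt K)).
  eapply Rle_trans.
  - apply (RInt_le_primitive _ F (fun s => 128 / PI * cauchy_tan_half K t0 s)).
    + lra.
    + apply ex_RInt_gauss_cos.
    + intros s Hs. apply is_derive_scal, is_derive_atan_tan_half; auto.
    + intros s Hs. apply (continuous_scal_r (128 / PI) (cauchy_tan_half K t0)).
      apply continuous_cauchy_tan_half; auto; lra.
    + intros s Hs. unfold gauss_cos.
      replace (128 / PI * cauchy_tan_half K t0 s) with (128 * cauchy_tan_half K t0 s / PI)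
        by (field; lra).
      apply Rmult_le_compat_r; [left; apply Rinv_0_lt_compat; lra |].
      apply exp_neg_sqr_le_cauchy_tan_half; auto.
  - unfold F.
    pose proof (atan_bound (sqrt K * (tan (PI / 2 / 2) - t0))).
    pose proof (atan_bound (sqrt K * (tan (0 / 2) - t0))).
    set (x1 := atan (sqrt K * (tan (PI / 2 / 2) - t0))) in *.
    set (x0 := atan (sqrt K * (tan (0 / 2) - t0))) in *.
    replace (128 / PI * (x1 / sqrt K) - 128 / PI * (x0 / sqrt K))
      with (128 / sqrt K * ((x1 - x0) / PI)) by (field; lra).
    rewrite <- (Rmult_1_r (128 / sqrt K)) at 2.
    apply Rmult_le_compat_l; [apply Rdiv_le_0_compat; lra |].
    apply (Rdiv_le_1 _ _ HPI); lra.
Qed.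

Lemma RInt_gauss_cos_reflect (u v : R) :
  RInt (gauss_cos u v) (PI / 2) PI = RInt (gauss_cos u (- v)) 0 (PI / 2).
Proof.
  pose proof (RInt_comp_reflect (gauss_cos u v) PI 0 (PI / 2) (ex_RInt_gauss_cos _ _ _ _)) as E.
  replace (PI - PI / 2) with (PI / 2) in E by field.
  rewrite Rminus_0_r in E. rewrite <- E.
  apply RInt_ext. intros s _. unfold gauss_cos.
  rewrite Rtrigo_facts.cos_pi_minus. f_equal. f_equal. ring.
Qed.

Theorem lemmaA4 :
  exists C : R, forall u v : R,
    RInt (fun s => exp (- (u - v * cos s) ^ 2) / PI) 0 PI
    <= C / sqrt ((Rabs (u + v) + 1) * (Rabs (u - v) + 1)).
Proof.
  exists 256. intros u v.
  change (RInt (gauss_cos u v) 0 PI <= 256 / sqrt ((Rabs (u + v) + 1) * (Rabs (u - v) + 1))).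
  pose proof PI_RGT_0.
  rewrite <- (RInt_Chasles (gauss_cos u v) 0 (PI / 2) PI) by apply ex_RInt_gauss_cos.
  change (RInt (gauss_cos u v) 0 (PI / 2) + RInt (gauss_cos u v) (PI / 2) PI
    <= 256 / sqrt ((Rabs (u + v) + 1) * (Rabs (u - v) + 1))).
  rewrite RInt_gauss_cos_reflect.
  pose proof (RInt_gauss_cos_quarter_le u v) as H1.
  pose proof (RInt_gauss_cos_quarter_le u (- v)) as H2.
  replace (u - - v) with (u + v) in H2 by ring.
  replace (u + - v) with (u - v) in H2 by ring.
  rewrite Rmult_comm in H1. unfold Rdiv in *. lra.
Qed.
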